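(* Let $\mathcal{T}=(T_n)_{n\in\mathbb{N}}$ be a scale with sequence of factors $(\kappa_n)_{n\in\mathbb{N}}$. Then there is a rational $\mathcal{T}$-sparsely long tail $R_\infty\subset\mathbb{N}$ with $0<d(R_\infty)<1$.
   Context: A scale is a sequence of positive integers $\mathcal{T}=(T_n)_{n\in\mathbb{N}}$ together with a sequence of integers (factors) $(\kappa_n)_{n\in\mathbb{N}}$ such that $\kappa_0=3$, $\kappa_n$ is a multiple of $3\kappa_{n-1}$ for $n\ge1$, $T_0$ is a multiple of $3$, $T_n=\kappa_nT_{n-1}$ for $n\ge1$, and $\kappa_{n+1}/\kappa_n\to\infty$. An $\mathbb{N}$-interval is $[a,b]_{\mathbb{N}}=[a,b]\cap\mathbb{N}$. A component of $\mathbb{M}\subset\mathbb{N}$ is a maximal $\mathbb{N}$-interval contained in $\mathbb{M}$. For $T\ge1$, a $T$-regular interval is $[kT,(k+1)T-1]_{\mathbb{N}}$ for some $k\ge0$. $R_\infty\subset\mathbb{N}$ is $\mathcal{T}$-adapted if each component of $R_\infty$ is a $T_n$-regular interval for some $n$; its $n$-skeleton $R_n$ is the union of the components of $R_\infty$ that are $T_k$-regular for some $k\ge n$. $R_\infty$ is a $\mathcal{T}$-sparsely long tail if: (1) it is $\mathcal{T}$-adapted; (2) $0\notin R_\infty$; (3) for every $n\ge1$ and every $T_n$-regular interval $I=[a,b]_{\mathbb{N}}$ not contained in $R_\infty$ (equivalently not contained in $R_n$), one has $I\cap R_{n-1}\subset[a+T_n/3,\,b-T_n/3]_{\mathbb{N}}$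 and $0<\#(R_{n-1}\cap I)/T_n\le1/\kappa_n$. For $A\subset\mathbb{Z}$, $\bar d(A)=\limsup_{N}\frac1N\#(A\cap[0,N-1])$, $d(A)$ the density when $\limsup=\liminf$. An arithmetic progression is $a\mathbb{Z}+b$ ($a,b\in\mathbb{N}$, $a\ne0$); $A\subset\mathbb{Z}$ is rational if for every $\varepsilon>0$ there is a finite union $B$ of arithmetic progressions with $\bar d(A\triangle B)<\varepsilon$; $A\subset\mathbb{N}$ is rational if $A=C\cap\mathbb{N}$ for a rational $C\subset\mathbb{Z}$. A rational $\mathcal{T}$-sparsely long tail is a set that is both. *)

From Stdlib Require Import Reals ZArith Arith List.

Definition is_scale (T kappa : nat -> nat) : Prop :=
  kappa 0 = 3 /\
  (forall n, Nat.divide (3 * kappa n) (kappa (S n))) /\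
  (forall n, 0 < T n) /\
  Nat.divide 3 (T 0) /\
  (forall n, T (S n) = kappa (S n) * T n) /\
  cv_infty (fun n => (INR (kappa (S n)) / INR (kappa n))%R).

Definition regular (T a b : nat) : Prop :=
  exists k, a = k * T /\ b = (k + 1) * T - 1.

Definition component (M : nat -> bool) (a b : nat) : Prop :=
  a <= b /\ (forall x, a <= x <= b -> M x = true) /\
  (a = 0 \/ M (a - 1) = false) /\ M (S b) = false.

Definition adapted (T : nat -> nat) (M : nat -> bool) : Prop :=
  (forall x, M x = true -> exists a b, a <= x <= b /\ component M a b) /\
  (forall a b, component M a b -> exists n, regular (T n) a b).

Definition skeleton (T : nat -> nat) (M : nat -> bool) (n x : nat) : Prop :=
  exists a b, component M a b /\ a <= x <= b /\
    exists k, n <= k /\ regular (T k) a b.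

Definition card_in (P : nat -> Prop) (a b c : nat) : Prop :=
  exists s : list nat, NoDup s /\
    (forall x, In x s <-> (a <= x <= b /\ P x)) /\ length s = c.

Definition sparsely_long_tail (T kappa : nat -> nat) (M : nat -> bool) : Prop :=
  adapted T M /\
  M 0 = false /\
  (forall n, 1 <= n -> forall a b, regular (T n) a b ->
     ~ (forall x, a <= x <= b -> M x = true) ->
     (forall x, a <= x <= b -> skeleton T M (n - 1) x ->
        a + T n / 3 <= x <= b - T n / 3) /\
     exists c, card_in (skeleton T M (n - 1)) a b c /\
       (0 < INR c / INR (T n) <= 1 / INR (kappa n))%R).

Fixpoint countZ (D : Z -> bool) (N : nat) : nat :=
  match N with
  | O => O
  | S N' => countZ D N' + (if D (Z.of_nat N') then 1 else 0)
  end.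

(** the sequence (1/N) #(D ∩ [0,N-1]), indexed by N = n+1 >= 1 *)
Definition dens_seq (D : Z -> bool) (n : nat) : R :=
  (INR (countZ D (S n)) / INR (S n))%R.

Definition is_limsup (u : nat -> R) (l : R) : Prop :=
  forall e, (0 < e)%R ->
    (exists N, forall n, (N <= n)%nat -> (u n < l + e)%R) /\
    (forall N, exists n, (N <= n)%nat /\ (l - e < u n)%R).

Definition upper_density_lt (D : Z -> bool) (eps : R) : Prop :=
  exists l, is_limsup (dens_seq D) l /\ (l < eps)%R.

Definition has_density (D : Z -> bool) (d : R) : Prop :=
  Un_cv (dens_seq D) d.

Definition natZ (A : nat -> bool) : Z -> bool :=
  fun z => andb (0 <=? z)%Z (A (Z.to_nat z)).

(** x ∈ aZ + b  (for a <> 0) *)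
Definition in_AP (a b : nat) (x : Z) : bool :=
  ((x - Z.of_nat b) mod Z.of_nat a =? 0)%Z.

Definition in_union (L : list (nat * nat)) (x : Z) : bool :=
  existsb (fun p => in_AP (fst p) (snd p) x) L.

Definition rationalZ (C : Z -> bool) : Prop :=
  forall eps, (0 < eps)%R ->
    exists L : list (nat * nat), (forall p, In p L -> fst p <> 0) /\
      upper_density_lt (fun x => xorb (C x) (in_union L x)) eps.

Definition rationalN (A : nat -> bool) : Prop :=
  exists C, rationalZ C /\ forall n, A n = C (Z.of_nat n).

From Stdlib Require Import Reals ZArith Arith List Lia Lra.

(** Write [q_m = κ_{m+1}/3], so that [T_{m+1}/3 = q_m T_m], and let
      L_m = { x | ⌊x / T_m⌋ ≡ q_m (mod κ_{m+1}) } :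
    inside every T_{m+1}-regular interval, L_m is the single T_m-regular
    interval starting at one third of it.  We take R_∞ = ⋃_m L_m.

    A point x ∈ R_∞ lies in a largest level L_j, and the
      T_j-regular interval around x is then a component of R_∞: its two
      neighbouring points lie in no level.  Hence the components of R_∞ are
      exactly these intervals, the n-skeleton is ⋃_{m ≥ n} L_m, and inside a
      T_n-regular interval not contained in R_∞ the (n-1)-skeleton is exactly
      L_{n-1}.  L_m is T_{m+1}-periodic with at most 4N/κ_{m+1} points below
      N, so P_k = L_0 ∪ … ∪ L_{k-1} is T_k-periodic (a finite union of
      arithmetic progressions, with a density) while R_∞ ∖ P_k has at most
      6N/κ_{k+1} points below N (the κ's grow geometrically).  Letting k grow
      shows that R_∞ has a density d, that it is rational, and that
      0 < d(P_1) ≤ d ≤ 6/κ_1 ≤ 2/3. *)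

Local Open Scope bool_scope.

Lemma div_eq_iff t x u : 0 < t -> (x / t = u <-> t * u <= x < t * (u + 1)).
Proof.
  intros Ht; split.
  - intros <-. pose proof (Nat.div_mod x t ltac:(lia)).
    pose proof (Nat.mod_upper_bound x t ltac:(lia)). nia.
  - intros Hx. symmetry. apply (Nat.div_unique x t u (x - t * u)); nia.
Qed.

Lemma mod_eq_of_decomp k u r : r < k -> (exists w, u = k * w + r) -> u mod k = r.
Proof. intros Hr [w ->]. symmetry. apply (Nat.mod_unique _ _ w); lia. Qed.

Lemma block_bounds t x : 0 < t -> x / t * t <= x <= (x / t + 1) * t - 1.
Proof.
  intros Ht. pose proof (Nat.div_mod x t ltac:(lia)).
  pose proof (Nat.mod_upper_bound x t ltac:(lia)). nia.
Qed.

Lemma div_pred_same c P : 0 < P -> ~ Nat.divide P c -> (c - 1) / P = c / P.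
Proof.
  intros HP Hd. pose proof (Nat.div_mod c P ltac:(lia)) as E.
  pose proof (Nat.mod_upper_bound c P ltac:(lia)).
  destruct (c mod P) as [|r] eqn:Er.
  - exfalso; apply Hd. exists (c / P). lia.
  - symmetry. apply (Nat.div_unique _ _ _ r); lia.
Qed.

Lemma div_succ_same c P : 0 < P -> ~ Nat.divide P (c + 1) -> (c + 1) / P = c / P.
Proof.
  intros HP Hd. pose proof (Nat.div_mod c P ltac:(lia)) as E.
  pose proof (Nat.mod_upper_bound c P ltac:(lia)).
  destruct (Nat.eq_dec (c mod P + 1) P).
  - exfalso; apply Hd. exists (c / P + 1). lia.
  - symmetry. apply (Nat.div_unique _ _ _ (c mod P + 1)); lia.
Qed.

Lemma not_divide_of_mod K P c r : 0 < K -> c mod K = r -> r <> 0 -> ~ Nat.divide (K * P) c.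
Proof.
  intros HK Hc Hr [w Hw]. apply Hr. rewrite <- Hc.
  apply mod_eq_of_decomp; [lia|]. exists (w * P). lia.
Qed.

Lemma component_unique M a b a' b' x : component M a b -> component M a' b' ->
  a <= x <= b -> a' <= x <= b' -> a = a' /\ b = b'.
Proof.
  intros (Hab & Hin & Hleft & Hright) (Hab' & Hin' & Hleft' & Hright') Hx Hx'.
  assert (a = a').
  { destruct (Nat.lt_trichotomy a a') as [l|[e|l]]; auto.
    - destruct Hleft' as [Hl|Hl]; [lia|]. rewrite Hin in Hl by lia. discriminate.
    - destruct Hleft as [Hl|Hl]; [lia|]. rewrite Hin' in Hl by lia. discriminate. }
  split; auto.
  destruct (Nat.lt_trichotomy b b') as [l|[e|l]]; auto.
  - rewrite Hin' in Hright by lia. discriminate.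
  - rewrite Hin in Hright' by lia. discriminate.
Qed.

Lemma regular_length t a b : 0 < t -> regular t a b -> b + 1 - a = t.
Proof. intros Ht [k [-> ->]]. nia. Qed.

Fixpoint cnt (f : nat -> bool) (N : nat) : nat :=
  match N with 0 => 0 | S N' => cnt f N' + (if f N' then 1 else 0) end.

Definition dens (f : nat -> bool) (n : nat) : R := (INR (cnt f (S n)) / INR (S n))%R.

Lemma cnt_ext f g N : (forall x, x < N -> f x = g x) -> cnt f N = cnt g N.
Proof. induction N; simpl; intros Hfg; auto. rewrite IHN, Hfg by auto. reflexivity. Qed.

Lemma cnt_mono f g N : (forall x, x < N -> f x = true -> g x = true) -> cnt f N <= cnt g N.
Proof.
  induction N; simpl; intros Hfg; auto. specialize (IHN ltac:(auto)).
  specialize (Hfg N ltac:(lia)). destruct (f N), (g N); try lia.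
Qed.

Lemma cnt_le f N : cnt f N <= N.
Proof. induction N; simpl; auto. destruct (f N); lia. Qed.

Lemma cnt_incr f N M : N <= M -> cnt f N <= cnt f M.
Proof. induction 1; simpl; auto. destruct (f m); lia. Qed.

Lemma cnt_union f g N : cnt (fun x => f x || g x) N <= cnt f N + cnt g N.
Proof. induction N; simpl; auto. destruct (f N), (g N); simpl; lia. Qed.

Lemma cnt_sub_split f g N : (forall x, g x = true -> f x = true) ->
  cnt f N = cnt g N + cnt (fun x => f x && negb (g x)) N.
Proof.
  intros Hgf. induction N; simpl; auto. rewrite IHN.
  destruct (g N) eqn:Eg; [rewrite (Hgf N Eg)|]; destruct (f N); simpl; lia.
Qed.

Lemma cnt_add f N M : cnt f (N + M) = cnt f N + cnt (fun x => f (N + x)) M.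
Proof. induction M; simpl; [rewrite Nat.add_0_r; lia|]. rewrite Nat.add_succ_r. simpl. lia. Qed.

Lemma cnt_false N : cnt (fun _ => false) N = 0.
Proof. induction N; simpl; lia. Qed.

Lemma cnt_pos f N x : x < N -> f x = true -> 1 <= cnt f N.
Proof. intros Hx Hf. pose proof (cnt_incr f (S x) N Hx) as H. simpl in H. rewrite Hf in H. lia. Qed.

Lemma cnt_interval lo hi N : lo <= hi ->
  cnt (fun x => (lo <=? x) && (x <? hi)) N = Nat.min N hi - Nat.min N lo.
Proof.
  intros h. induction N as [|N IH]; [reflexivity|]. cbn [cnt]. rewrite IH.
  destruct (Nat.leb_spec lo N), (Nat.ltb_spec N hi); cbv beta iota delta [andb]; lia.
Qed.

Lemma cnt_periodic f P : (forall x, f (x + P) = f x) ->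
  forall q r, cnt f (q * P + r) = q * cnt f P + cnt f r.
Proof.
  intros Hf q r. induction q as [|q IH]; [reflexivity|].
  replace (S q * P + r) with (P + (q * P + r)) by lia. rewrite cnt_add.
  rewrite (cnt_ext (fun x => f (P + x)) f), IH; [lia|].
  intros x _. rewrite Nat.add_comm. auto.
Qed.

Lemma cnt_periodic_approx f P N : 0 < P -> (forall x, f (x + P) = f x) ->
  cnt f N * P <= N * cnt f P + P * P /\ N * cnt f P <= cnt f N * P + P * P.
Proof.
  intros HP Hf. pose proof (Nat.div_mod N P ltac:(lia)) as E.
  pose proof (Nat.mod_upper_bound N P ltac:(lia)).
  assert (C : cnt f N = N / P * cnt f P + cnt f (N mod P)).
  { rewrite <- (cnt_periodic f P Hf). f_equal. lia. }
  rewrite C. pose proof (cnt_le f P). pose proof (cnt_le f (N mod P)). nia.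
Qed.

Local Open Scope R_scope.

Lemma div_le_iff a b c : 0 < b -> (a / b <= c <-> a <= c * b).
Proof.
  intros Hb. assert (E : a = (a / b) * b) by (field; lra). split; intros h.
  - rewrite E. apply Rmult_le_compat_r; lra.
  - apply (Rmult_le_reg_r b); auto. rewrite <- E. lra.
Qed.

Lemma div_lt_iff a b c : 0 < b -> (a / b < c <-> a < c * b).
Proof.
  intros Hb. assert (E : a = (a / b) * b) by (field; lra). split; intros h.
  - rewrite E. apply Rmult_lt_compat_r; lra.
  - apply (Rmult_lt_reg_r b); auto. rewrite <- E. lra.
Qed.

Lemma periodic_density f P : (0 < P)%nat -> (forall x, f (x + P)%nat = f x) ->
  Un_cv (dens f) (INR (cnt f P) / INR P).
Proof.
  intros HP Hf eps Heps.
  destruct (INR_archimed eps (INR P) Heps) as [N0 HN0].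
  exists N0. intros n hn. unfold Rdist, dens.
  destruct (cnt_periodic_approx f P (S n) HP Hf) as [h1 h2].
  apply le_INR in h1, h2. rewrite !plus_INR, !mult_INR in h1, h2.
  set (A := INR (cnt f (S n))) in *. set (c := INR (cnt f P)) in *.
  set (Nn := INR (S n)) in *. set (p := INR P) in *.
  assert (Hp : 0 < p) by (apply lt_0_INR; lia).
  assert (HN : 0 < Nn) by (apply lt_0_INR; lia).
  assert (HNn : INR N0 <= Nn) by (apply le_INR; lia).
  assert (E : A / Nn - c / p = (A * p - Nn * c) / (Nn * p)) by (field; lra).
  assert (H1 : p < Nn * eps) by nra.
  assert (H2 : p * p < eps * (Nn * p)) by nra.
  rewrite E. apply Rabs_def1.
  - apply div_lt_iff; nra.
  - assert (H4 : (Nn * c - A * p) / (Nn * p) < eps) by (apply div_lt_iff; nra).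
    replace ((A * p - Nn * c) / (Nn * p)) with (- ((Nn * c - A * p) / (Nn * p))) by (field; lra).
    lra.
Qed.

Lemma cv_le_const u l c : Un_cv u l -> (forall n, u n <= c) -> l <= c.
Proof.
  intros Hu Hc. destruct (Rle_dec l c) as [h|h]; auto. exfalso.
  destruct (Hu (l - c)) as [N HN]; [lra|]. specialize (HN N (le_n _)). specialize (Hc N).
  unfold Rdist in HN. apply Rabs_def2 in HN. lra.
Qed.

Lemma cv_ext u v l : (forall n, u n = v n) -> Un_cv u l -> Un_cv v l.
Proof. intros Euv Hu e He. destruct (Hu e He) as [N HN]. exists N. intros n hn. rewrite <- Euv. auto. Qed.

Lemma cv_limsup u l : Un_cv u l -> is_limsup u l.
Proof.
  intros Hu e He. destruct (Hu e He) as [N HN]. split.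
  - exists N. intros n hn. specialize (HN n hn). unfold Rdist in HN. apply Rabs_def2 in HN. lra.
  - intros M. exists (max M N). split; [lia|]. specialize (HN (max M N) ltac:(lia)).
    unfold Rdist in HN. apply Rabs_def2 in HN. lra.
Qed.

Local Close Scope R_scope.

Lemma existsb_ext_in {A} (f g : A -> bool) l :
  (forall a, In a l -> f a = g a) -> existsb f l = existsb g l.
Proof. induction l as [|a l IH]; simpl; intros Hfg; auto. rewrite Hfg, IH; auto. Qed.

Lemma natZ_of_nat (A : nat -> bool) n : natZ A (Z.of_nat n) = A n.
Proof.
  unfold natZ. rewrite Nat2Z.id. replace (0 <=? Z.of_nat n)%Z with true; [reflexivity|].
  symmetry. apply Z.leb_le. lia.
Qed.

Lemma countZ_cnt D N : countZ D N = cnt (fun n => D (Z.of_nat n)) N.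
Proof. induction N; simpl; auto. Qed.

Lemma dens_seq_of_nat D f n : (forall x, D (Z.of_nat x) = f x) -> dens_seq D n = dens f n.
Proof. intros HD. unfold dens_seq, dens. rewrite countZ_cnt, (cnt_ext _ f); auto. Qed.

Lemma in_AP_iff P r x : 0 < P -> r < P -> (in_AP P r (Z.of_nat x) = true <-> x mod P = r).
Proof.
  intros HP hr. unfold in_AP. rewrite Z.eqb_eq.
  pose proof (Nat.div_mod x P ltac:(lia)) as E.
  pose proof (Nat.mod_upper_bound x P ltac:(lia)).
  assert (EZ : (Z.of_nat x - Z.of_nat r
                = (Z.of_nat (x mod P) - Z.of_nat r) + Z.of_nat (x / P) * Z.of_nat P)%Z).
  { rewrite E at 1. rewrite Nat2Z.inj_add, Nat2Z.inj_mul. lia. }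
  rewrite EZ, Z.mod_add by lia. split.
  - intros h. apply Z.mod_divide in h; [|lia]. destruct h as [w Hw].
    remember (x mod P) as s. clear E EZ Heqs.
    destruct (Z.lt_trichotomy w 0) as [hw|[hw|hw]]; [nia|subst; lia|nia].
  - intros <-. rewrite Z.sub_diag. apply Z.mod_0_l. lia.
Qed.


Section Construction.

Variables T kappa : nat -> nat.
Hypothesis Hscale : is_scale T kappa.

Lemma T_pos m : 0 < T m.
Proof. pose proof Hscale as (_ & _ & HT & _). apply HT. Qed.

Lemma T_succ m : T (S m) = kappa (S m) * T m.
Proof. pose proof Hscale as (_ & _ & _ & _ & HT & _). apply HT. Qed.

Lemma kappa_succ_ge m : 3 * kappa m <= kappa (S m).
Proof.
  pose proof Hscale as (_ & Hdiv & _).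
  apply Nat.divide_pos_le; [|apply Hdiv].
  pose proof (T_pos (S m)) as HT. rewrite T_succ in HT. destruct (kappa (S m)); lia.
Qed.

Lemma kappa_ge_index m : m + 3 <= kappa m.
Proof.
  induction m as [|m IH].
  - pose proof Hscale as (H0 & _). lia.
  - pose proof (kappa_succ_ge m). lia.
Qed.

Lemma kappa_ge3 m : 3 <= kappa m.
Proof. pose proof (kappa_ge_index m). lia. Qed.

Definition third (m : nat) : nat := kappa (S m) / 3.

Lemma kappa_succ_third m : kappa (S m) = 3 * third m.
Proof.
  pose proof Hscale as (_ & Hdiv & _).
  destruct (Hdiv m) as [z Hz]. unfold third. rewrite Hz.
  replace (z * (3 * kappa m)) with (z * kappa m * 3) by lia.
  rewrite Nat.div_mul by lia. lia.
Qed.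

Lemma third_ge3 m : 3 <= third m.
Proof.
  pose proof (kappa_succ_third m). pose proof (kappa_succ_ge m). pose proof (kappa_ge3 m). lia.
Qed.

Lemma T_factor j m : j <= m -> exists P, T m = T j * P /\ 0 < P.
Proof.
  induction 1 as [|m _ [P [HP HP0]]].
  - exists 1. lia.
  - exists (kappa (S m) * P). rewrite T_succ, HP. pose proof (kappa_ge3 (S m)). split; nia.
Qed.

Lemma T_factor_lt j m : j < m -> exists P, T m = T j * (kappa (S j) * P) /\ 0 < P.
Proof.
  intros Hjm. destruct (T_factor (S j) m Hjm) as [P [HP HP0]].
  exists P. rewrite HP, T_succ. split; lia.
Qed.

Lemma T_lt j m : j < m -> T j < T m.
Proof.
  intros Hjm. destruct (T_factor_lt j m Hjm) as [P [HP HP0]].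
  pose proof (kappa_ge3 (S j)). pose proof (T_pos j). rewrite HP.
  assert (1 < kappa (S j) * P) by nia. nia.
Qed.

Lemma T_inj j m : T j = T m -> j = m.
Proof.
  intros E. destruct (Nat.lt_trichotomy j m) as [h|[h|h]]; auto; apply T_lt in h; lia.
Qed.

Lemma T_gt_index m : m < T m.
Proof.
  induction m as [|m IH]; [apply T_pos|]. pose proof (T_lt m (S m) ltac:(lia)). lia.
Qed.

(** ** The levels L_m and the set R_∞ *)

Definition level (m x : nat) : bool := Nat.eqb ((x / T m) mod kappa (S m)) (third m).

Lemma level_true m x : level m x = true <-> (x / T m) mod kappa (S m) = third m.
Proof. apply Nat.eqb_eq. Qed.

Lemma level_false m x : (x / T m) mod kappa (S m) <> third m -> level m x = false.
Proof. apply Nat.eqb_neq. Qed.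

Lemma level_coarser j m x y : j <= m -> x / T j = y / T j -> level m x = level m y.
Proof.
  intros Hjm E. destruct (T_factor j m Hjm) as [P [HP HP0]].
  unfold level. rewrite HP, <- !Nat.Div0.div_div, E. reflexivity.
Qed.

Lemma level_periodic m x w : level m (x + w * T (S m)) = level m x.
Proof.
  unfold level. rewrite T_succ. pose proof (T_pos m). pose proof (kappa_ge3 (S m)).
  replace (w * (kappa (S m) * T m)) with (w * kappa (S m) * T m) by lia.
  rewrite Nat.div_add, Nat.Div0.mod_add by lia. reflexivity.
Qed.

Lemma level_lower_bound m x : level m x = true -> third m * T m <= x.
Proof.
  intros E%level_true. pose proof (Nat.Div0.mod_le (x / T m) (kappa (S m))).
  pose proof (block_bounds (T m) x (T_pos m)). nia.
Qed.

Lemma level_index_lt m x : level m x = true -> m < x.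
Proof.
  intros E%level_lower_bound. pose proof (T_gt_index m). pose proof (third_ge3 m). nia.
Qed.

(** R_∞ = ⋃_m L_m; thanks to [level_index_lt] the union is finite at each point. *)
Definition Rinf (x : nat) : bool := existsb (fun m => level m x) (seq 0 x).

Lemma Rinf_spec x : Rinf x = true <-> exists m, level m x = true.
Proof.
  unfold Rinf. rewrite existsb_exists. split.
  - intros [m [_ Hm]]; eauto.
  - intros [m Hm]. exists m. split; auto. apply in_seq. pose proof (level_index_lt m x Hm). lia.
Qed.

Lemma Rinf_false x : (forall m, level m x = false) -> Rinf x = false.
Proof.
  intros Hx. apply Bool.not_true_iff_false. rewrite Rinf_spec. intros [m Hm]. congruence.
Qed.

(** ** Components of R_∞ *)

Definition top_level (j x : nat) : Prop :=
  level j x = true /\ forall i, j < i -> level i x = false.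

Lemma top_level_exists j x : level j x = true -> exists j', j <= j' /\ top_level j' x.
Proof.
  remember (x - j) as d eqn:Ed. revert j Ed.
  induction d as [d IH] using (well_founded_induction lt_wf). intros j Ed Hj.
  destruct (existsb (fun i => level i x) (seq (S j) x)) eqn:E.
  - apply existsb_exists in E as [i [Hi Hli]]. apply in_seq in Hi.
    pose proof (level_index_lt i x Hli).
    destruct (IH (x - i) ltac:(lia) i eq_refl Hli) as [j' [Hij' Htop]].
    exists j'. split; [lia|exact Htop].
  - exists j. split; [lia|split; [exact Hj|]]. intros i Hi.
    apply Bool.not_true_iff_false. intros Hli. pose proof (level_index_lt i x Hli).
    rewrite <- Bool.not_true_iff_false in E. apply E, existsb_exists.
    exists i. split; [apply in_seq; lia|exact Hli].
Qed.

(** The point just left of the top-level block of [x] lies in no level: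
    finer levels see the last of their own blocks, coarser ones the same block as [x]. *)
Lemma left_neighbour_out j x : top_level j x -> 1 <= x / T j ->
  forall m, level m (x / T j * T j - 1) = false.
Proof.
  intros [Hj Hmax] Hc m. set (c := x / T j) in *.
  pose proof (T_pos j) as Tj. pose proof (kappa_succ_third j). pose proof (third_ge3 j).
  assert (Ez : (c * T j - 1) / T j = c - 1) by (apply div_eq_iff; nia).
  pose proof (proj1 (level_true j x) Hj) as Hq. fold c in Hq.
  pose proof (Nat.div_mod c (kappa (S j)) ltac:(lia)).
  destruct (Nat.lt_trichotomy j m) as [Hjm|[<-|Hmj]].
  - rewrite <- (Hmax m Hjm). apply (level_coarser m); [lia|].
    destruct (T_factor_lt j m Hjm) as [P [HP HP0]]. rewrite HP, <- !(Nat.Div0.div_div _ (T j)), Ez.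
    apply div_pred_same; [nia|]. apply (not_divide_of_mod _ _ _ (third j)); [lia|exact Hq|lia].
  - apply level_false. rewrite Ez, (mod_eq_of_decomp _ _ (third j - 1)); [lia|lia|].
    exists (c / kappa (S j)). lia.
  - destruct (T_factor_lt m j Hmj) as [P [HP HP0]].
    pose proof (kappa_succ_third m). pose proof (third_ge3 m). pose proof (T_pos m).
    apply level_false.
    assert (E2 : (c * T j - 1) / T m = c * kappa (S m) * P - 1)
      by (apply div_eq_iff; [lia|]; rewrite HP; split; nia).
    rewrite E2, (mod_eq_of_decomp _ _ (kappa (S m) - 1)); [lia|lia|].
    exists (c * P - 1). nia.
Qed.

Lemma right_neighbour_out j x : top_level j x ->
  forall m, level m ((x / T j + 1) * T j) = false.
Proof.
  intros [Hj Hmax] m. set (c := x / T j) in *.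
  pose proof (T_pos j) as Tj. pose proof (kappa_succ_third j). pose proof (third_ge3 j).
  assert (Ez : ((c + 1) * T j) / T j = c + 1) by (apply Nat.div_mul; lia).
  pose proof (proj1 (level_true j x) Hj) as Hq. fold c in Hq.
  pose proof (Nat.div_mod c (kappa (S j)) ltac:(lia)).
  assert (Hs : (c + 1) mod kappa (S j) = third j + 1)
    by (apply mod_eq_of_decomp; [lia|]; exists (c / kappa (S j)); lia).
  destruct (Nat.lt_trichotomy j m) as [Hjm|[<-|Hmj]].
  - rewrite <- (Hmax m Hjm). apply (level_coarser m); [lia|].
    destruct (T_factor_lt j m Hjm) as [P [HP HP0]]. rewrite HP, <- !(Nat.Div0.div_div _ (T j)), Ez.
    apply div_succ_same; [nia|]. apply (not_divide_of_mod _ _ _ (third j + 1)); [lia|exact Hs|lia].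
  - apply level_false. rewrite Ez. lia.
  - destruct (T_factor_lt m j Hmj) as [P [HP HP0]].
    pose proof (kappa_succ_third m). pose proof (third_ge3 m). pose proof (T_pos m).
    apply level_false.
    assert (E2 : ((c + 1) * T j) / T m = (c + 1) * kappa (S m) * P)
      by (apply div_eq_iff; [lia|]; rewrite HP; split; nia).
    rewrite E2, (mod_eq_of_decomp _ _ 0); [lia|lia|]. exists ((c + 1) * P). nia.
Qed.

Lemma top_block_component j x : top_level j x ->
  component Rinf (x / T j * T j) ((x / T j + 1) * T j - 1).
Proof.
  intros Htop. pose proof (T_pos j) as Tj.
  split; [nia|split; [|split]].
  - intros y Hy. apply Rinf_spec. exists j. rewrite <- (proj1 Htop).
    apply (level_coarser j); [lia|]. apply div_eq_iff; nia.
  - destruct (x / T j) eqn:Ec; [left; lia|right].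
    rewrite <- Ec. apply Rinf_false, left_neighbour_out; [exact Htop|lia].
  - replace (S ((x / T j + 1) * T j - 1)) with ((x / T j + 1) * T j) by nia.
    apply Rinf_false, right_neighbour_out, Htop.
Qed.

Lemma component_of_point x a b : component Rinf a b -> a <= x <= b ->
  exists j, top_level j x /\ a = x / T j * T j /\ b = (x / T j + 1) * T j - 1.
Proof.
  intros Hc Hx. pose proof Hc as (_ & Hin & _).
  destruct (proj1 (Rinf_spec x) (Hin x Hx)) as [m Hm].
  destruct (top_level_exists m x Hm) as [j [_ Htop]].
  exists j. split; [exact Htop|].
  apply (component_unique Rinf a b _ _ x Hc (top_block_component j x Htop) Hx).
  apply block_bounds, T_pos.
Qed.

Lemma Rinf_adapted : adapted T Rinf.
Proof.
  split.
  - intros x Hx. apply Rinf_spec in Hx as [m Hm].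
    destruct (top_level_exists m x Hm) as [j [_ Htop]].
    exists (x / T j * T j), ((x / T j + 1) * T j - 1).
    split; [apply block_bounds, T_pos|apply top_block_component, Htop].
  - intros a b Hc. pose proof Hc as (Hab & _).
    destruct (component_of_point a a b Hc ltac:(lia)) as [j [_ [Ea Eb]]].
    exists j, (a / T j). split; assumption.
Qed.

Lemma skeleton_iff n x : skeleton T Rinf n x <-> exists j, n <= j /\ level j x = true.
Proof.
  split.
  - intros (a & b & Hc & Hx & k & Hk & Hreg).
    destruct (component_of_point x a b Hc Hx) as [j [[Hj _] [Ea Eb]]].
    exists j. split; [|exact Hj].
    apply regular_length in Hreg; [|apply T_pos]. pose proof (T_pos j).
    assert (T k = T j) as ->%T_inj by nia. exact Hk.
  - intros [j [Hj Hl]].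
    destruct (top_level_exists j x Hl) as [j' [Hjj' Htop]].
    exists (x / T j' * T j'), ((x / T j' + 1) * T j' - 1).
    split; [apply top_block_component, Htop|].
    split; [apply block_bounds, T_pos|].
    exists j'. split; [lia|]. exists (x / T j'). split; reflexivity.
Qed.

(** ** R_∞ is a sparsely long tail *)

Lemma skeleton_in_gap m k x :
  ~ (forall y, k * T (S m) <= y <= (k + 1) * T (S m) - 1 -> Rinf y = true) ->
  k * T (S m) <= x <= (k + 1) * T (S m) - 1 ->
  (skeleton T Rinf m x <-> x / T m = k * kappa (S m) + third m).
Proof.
  intros Hgap Hx.
  pose proof (T_succ m) as TS. pose proof (T_pos m) as Tm. pose proof (kappa_ge3 (S m)).
  pose proof (kappa_succ_third m). pose proof (third_ge3 m).
  assert (Hblk : forall y, k * T (S m) <= y <= (k + 1) * T (S m) - 1 -> y / T (S m) = k)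
    by (intros y Hy; apply div_eq_iff; nia).
  assert (Hq : x / T m / kappa (S m) = k).
  { rewrite Nat.Div0.div_div, Nat.mul_comm, <- TS. apply Hblk, Hx. }
  pose proof (Nat.div_mod (x / T m) (kappa (S m)) ltac:(lia)) as Ediv.
  rewrite skeleton_iff. split.
  - intros [j [Hj Hl]]. destruct (Nat.eq_dec j m) as [->|Hne].
    + apply level_true in Hl. rewrite Hl, Hq in Ediv. lia.
    + exfalso. apply Hgap. intros y Hy. apply Rinf_spec. exists j.
      rewrite <- Hl. apply (level_coarser (S m)); [lia|].
      rewrite (Hblk x Hx), (Hblk y Hy). reflexivity.
  - intros Ex. exists m. split; [lia|]. apply level_true. rewrite Ex.
    apply mod_eq_of_decomp; [lia|]. exists k. lia.
Qed.

Lemma Rinf_sparse n a b : 1 <= n -> regular (T n) a b ->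
  ~ (forall x, a <= x <= b -> Rinf x = true) ->
  (forall x, a <= x <= b -> skeleton T Rinf (n - 1) x -> a + T n / 3 <= x <= b - T n / 3) /\
  exists c, card_in (skeleton T Rinf (n - 1)) a b c /\
    (0 < INR c / INR (T n) <= 1 / INR (kappa n))%R.
Proof.
  intros Hn [k [-> ->]] Hgap. destruct n as [|m]; [lia|]. replace (S m - 1) with m by lia.
  pose proof (T_succ m) as TS. pose proof (kappa_succ_third m) as K3.
  pose proof (third_ge3 m). pose proof (T_pos m) as Tm.
  assert (Hthird : T (S m) / 3 = third m * T m).
  { rewrite TS, K3. replace (3 * third m * T m) with (third m * T m * 3) by lia.
    apply Nat.div_mul. lia. }
  split.
  - intros x Hx Hsk. apply (skeleton_in_gap m k x Hgap Hx), div_eq_iff in Hsk; [|lia].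
    rewrite Hthird, TS, K3. rewrite TS, K3 in Hx. nia.
  - exists (T m). split.
    + exists (seq (T m * (k * kappa (S m) + third m)) (T m)).
      split; [apply seq_NoDup|split; [|apply length_seq]].
      intros x. rewrite in_seq. split.
      * intros Hx.
        assert (Hab : k * T (S m) <= x <= (k + 1) * T (S m) - 1) by (rewrite TS, K3 in *; nia).
        split; [exact Hab|]. apply (skeleton_in_gap m k x Hgap Hab), div_eq_iff; lia.
      * intros [Hab Hsk]. apply (skeleton_in_gap m k x Hgap Hab), div_eq_iff in Hsk; lia.
    + rewrite TS, mult_INR.
      assert (0 < INR (T m))%R by (apply lt_0_INR; lia).
      assert (0 < INR (kappa (S m)))%R by (apply lt_0_INR; lia).
      replace (INR (T m) / (INR (kappa (S m)) * INR (T m)))%R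
        with (1 / INR (kappa (S m)))%R by (field; lra).
      split; [apply Rdiv_lt_0_compat|]; lra.
Qed.

Lemma Rinf_sparsely_long_tail : sparsely_long_tail T kappa Rinf.
Proof.
  split; [exact Rinf_adapted|split; [reflexivity|]].
  intros n Hn a b Hreg Hgap. apply Rinf_sparse; assumption.
Qed.

Lemma level_count_period m : cnt (level m) (T (S m)) = T m.
Proof.
  pose proof (T_succ m) as TS. pose proof (kappa_succ_third m) as K3.
  pose proof (third_ge3 m). pose proof (T_pos m) as Tm.
  rewrite (cnt_ext _ (fun x => (third m * T m <=? x) && (x <? (third m + 1) * T m))).
  - rewrite cnt_interval by nia. rewrite TS, K3. nia.
  - intros x Hx. unfold level. rewrite Nat.mod_small.
    2:{ apply Nat.Div0.div_lt_upper_bound. rewrite TS in Hx. nia. }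
    apply Bool.eq_iff_eq_true. rewrite Nat.eqb_eq, Bool.andb_true_iff, Nat.leb_le, Nat.ltb_lt.
    rewrite div_eq_iff by lia. split; intros; nia.
Qed.

(** Below any [N], L_m has at most [4N/κ_{m+1}] points (L_m starts at T_{m+1}/3). *)
Lemma level_count_bound m N : cnt (level m) N * kappa (S m) <= 4 * N.
Proof.
  pose proof (T_succ m) as TS. pose proof (kappa_succ_third m) as K3.
  pose proof (third_ge3 m). pose proof (T_pos m) as Tm.
  destruct (Nat.le_gt_cases N (third m * T m)) as [HN|HN].
  - rewrite (cnt_ext _ (fun _ => false)), cnt_false; [lia|].
    intros x Hx. destruct (level m x) eqn:E; auto. apply level_lower_bound in E. lia.
  - set (P := T (S m)). assert (HP : 0 < P) by (unfold P; nia).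
    assert (Hcover : N < (N / P + 1) * P) by (pose proof (block_bounds P N HP); lia).
    pose proof (cnt_incr (level m) N ((N / P + 1) * P + 0) ltac:(lia)) as Hm.
    rewrite cnt_periodic in Hm.
    2:{ intros x. rewrite <- (level_periodic m x 1). f_equal. lia. }
    simpl in Hm. unfold P in Hm at 2. rewrite level_count_period in Hm.
    pose proof (Nat.Div0.mul_div_le N P). unfold P in *. rewrite TS in *. nia.
Qed.

(** [low k] = P_k = L_0 ∪ … ∪ L_{k-1}, a T_k-periodic part of R_∞. *)
Definition low (k x : nat) : bool := existsb (fun m => level m x) (seq 0 k).

(** P_k is T_k-periodic, since every L_m with m < k is T_{m+1}-periodic. *)
Lemma low_shift k x w : low k (x + w * T k) = low k x.
Proof.
  unfold low. apply existsb_ext_in. intros m Hm. apply in_seq in Hm.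
  destruct (T_factor (S m) k ltac:(lia)) as [P [HP _]].
  replace (w * T k) with (w * P * T (S m)) by (rewrite HP; lia). apply level_periodic.
Qed.

Lemma low_Rinf k x : low k x = true -> Rinf x = true.
Proof. unfold low. rewrite existsb_exists. intros [m [_ Hm]]. apply Rinf_spec. eauto. Qed.

Definition high (k x : nat) : bool := Rinf x && negb (low k x).

Definition band (k j x : nat) : bool := existsb (fun i => level (k + i) x) (seq 0 j).

(** The band of levels from [k] on has at most [6N/κ_{k+1}] points below [N]:
    the bounds [4N/κ_{m+1}] of [level_count_bound] decrease geometrically. *)
Lemma band_count_bound k N j :
  (INR (cnt (band k j) N)
   <= 6 * INR N * (1 / INR (kappa (S k)) - 1 / INR (kappa (S (k + j)))))%R.
Proof.
  induction j as [|j IH].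
  - unfold band. simpl. rewrite cnt_false, Nat.add_0_r. simpl. lra.
  - assert (Hstep : cnt (band k (S j)) N <= cnt (band k j) N + cnt (level (k + j)) N).
    { rewrite (cnt_ext _ (fun x => band k j x || level (k + j) x)); [apply cnt_union|].
      intros x _. unfold band. rewrite seq_S, existsb_app. simpl.
      rewrite Bool.orb_false_r. reflexivity. }
    apply le_INR in Hstep. rewrite plus_INR in Hstep.
    pose proof (level_count_bound (k + j) N) as Hlev. apply le_INR in Hlev.
    rewrite !mult_INR in Hlev. simpl (INR 4) in Hlev.
    pose proof (kappa_succ_ge (S (k + j))) as Hk. apply le_INR in Hk. rewrite mult_INR in Hk.
    pose proof (kappa_ge3 (S (k + j))) as Hk3. apply le_INR in Hk3.
    replace (k + S j) with (S (k + j)) by lia.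
    set (a := INR (kappa (S (k + j)))) in *. set (b := INR (kappa (S (S (k + j))))) in *.
    set (Y := INR (cnt (level (k + j)) N)) in *. set (X := INR (cnt (band k j) N)) in *.
    set (NN := INR N) in *. simpl (INR 3) in *.
    assert (HN : (0 <= NN)%R) by apply pos_INR.
    assert (HY : (Y <= 4 * NN * (1 / a))%R).
    { apply (Rmult_le_reg_r a); [lra|].
      replace (4 * NN * (1 / a) * a)%R with (4 * NN)%R by (field; lra). lra. }
    assert (Hab : (1 / b <= (1 / a) / 3)%R).
    { apply Rmult_le_reg_r with (r := (3 * a * b)%R); [nra|].
      replace (1 / b * (3 * a * b))%R with (3 * a)%R by (field; lra).
      replace (1 / a / 3 * (3 * a * b))%R with b by (field; lra). lra. }
    assert (NN * (1 / b) <= NN * ((1 / a) / 3))%R by (apply Rmult_le_compat_l; auto).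
    lra.
Qed.

Lemma high_count_bound k N : (INR (cnt (high k) N) <= 6 * INR N / INR (kappa (S k)))%R.
Proof.
  eapply Rle_trans; [apply le_INR, (cnt_mono _ (band k N))|].
  - intros x Hx Hhigh. apply Bool.andb_true_iff in Hhigh as [HR Hlow].
    apply Rinf_spec in HR as [m Hm].
    assert (k <= m).
    { destruct (Nat.le_gt_cases k m) as [|Hmk]; auto. exfalso.
      assert (low k x = true) as Hl by (apply existsb_exists; exists m; split; [apply in_seq; lia|exact Hm]).
      rewrite Hl in Hlow. discriminate. }
    pose proof (level_index_lt m x Hm).
    unfold band. apply existsb_exists. exists (m - k). split; [apply in_seq; lia|].
    replace (k + (m - k)) with m by lia. exact Hm.
  - eapply Rle_trans; [apply band_count_bound|].
    pose proof (kappa_ge3 (S (k + N))) as K0. apply le_INR in K0.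
    pose proof (kappa_ge3 (S k)) as K1. apply le_INR in K1. simpl (INR 3) in *.
    assert (HN : (0 <= INR N)%R) by apply pos_INR.
    assert (0 <= INR N * (1 / INR (kappa (S (k + N)))))%R
      by (apply Rmult_le_pos; [exact HN|apply Rlt_le, Rdiv_lt_0_compat; lra]).
    replace (6 * INR N / INR (kappa (S k)))%R
      with (6 * INR N * (1 / INR (kappa (S k))))%R by (field; lra).
    lra.
Qed.

(** ** Density of R_∞ *)

Lemma dens_split k n : dens Rinf n = (dens (low k) n + dens (high k) n)%R.
Proof.
  unfold dens, high. rewrite (cnt_sub_split Rinf (low k)), plus_INR by apply low_Rinf.
  field. apply not_0_INR. lia.
Qed.

Lemma dens_high_bound k n : (0 <= dens (high k) n <= 6 / INR (kappa (S k)))%R.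
Proof.
  unfold dens. assert (HN : (0 < INR (S n))%R) by (apply lt_0_INR; lia). split.
  - apply Rmult_le_pos; [apply pos_INR|apply Rlt_le, Rinv_0_lt_compat, HN].
  - apply div_le_iff; [exact HN|].
    pose proof (kappa_ge3 (S k)) as K. apply le_INR in K. simpl (INR 3) in K.
    eapply Rle_trans; [apply high_count_bound|]. right. field. lra.
Qed.

Definition low_density (k : nat) : R := (INR (cnt (low k) (T k)) / INR (T k))%R.

Lemma low_density_cv k : Un_cv (dens (low k)) (low_density k).
Proof.
  apply periodic_density; [apply T_pos|]. intros x.
  rewrite <- (Nat.mul_1_l (T k)) at 1. apply low_shift.
Qed.

Lemma small_tail e : (0 < e)%R -> exists k, (6 / INR (kappa (S k)) < e)%R.
Proof.
  intros He. destruct (INR_archimed e 6 He) as [k Hk]. exists k.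
  pose proof (kappa_ge_index (S k)) as K. apply le_INR in K.
  assert (INR k <= INR (kappa (S k)))%R by (eapply Rle_trans; [|exact K]; apply le_INR; lia).
  assert (0 < INR (kappa (S k)))%R by (apply lt_0_INR; pose proof (kappa_ge3 (S k)); lia).
  apply div_lt_iff; nra.
Qed.

(** R_∞ has a density: its density sequence is Cauchy, being within
    [6/κ_{k+1}] of the convergent density sequence of P_k. *)
Lemma Rinf_density_cv : exists d, Un_cv (dens Rinf) d.
Proof.
  destruct (R_complete (dens Rinf)) as [d Hd]; [|exists d; exact Hd].
  intros e He. destruct (small_tail (e / 3)%R ltac:(lra)) as [k Hk].
  destruct (low_density_cv k (e / 6)%R ltac:(lra)) as [N HN].
  exists N. intros n m hn hm. unfold Rdist.
  pose proof (HN n hn) as h1. pose proof (HN m hm) as h2. unfold Rdist in h1, h2.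
  apply Rabs_def2 in h1, h2.
  rewrite (dens_split k n), (dens_split k m).
  pose proof (dens_high_bound k n). pose proof (dens_high_bound k m).
  apply Rabs_def1; lra.
Qed.

(** ** Rationality *)

Definition low_progressions (k : nat) : list (nat * nat) :=
  map (fun r => (T k, r)) (filter (low k) (seq 0 (T k))).

Lemma in_union_low k x : in_union (low_progressions k) (Z.of_nat x) = low k x.
Proof.
  pose proof (T_pos k) as Tk.
  assert (Ex : low k x = low k (x mod T k)).
  { rewrite (Nat.div_mod x (T k)) at 1 by lia.
    rewrite Nat.add_comm, Nat.mul_comm. apply low_shift. }
  apply Bool.eq_iff_eq_true. unfold in_union. rewrite existsb_exists. split.
  - intros [p [Hp Hap]]. apply in_map_iff in Hp as [r [<- Hr]].
    apply filter_In in Hr as [Hr Hlow]. apply in_seq in Hr. simpl in Hap.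
    apply in_AP_iff in Hap; [|lia|lia]. rewrite Ex, Hap. exact Hlow.
  - intros Hlow. exists (T k, x mod T k). pose proof (Nat.mod_upper_bound x (T k) ltac:(lia)).
    split.
    + apply in_map_iff. exists (x mod T k). split; [reflexivity|].
      apply filter_In. split; [apply in_seq; lia|]. rewrite <- Ex. exact Hlow.
    + simpl. apply in_AP_iff; lia.
Qed.

(** R_∞ differs from P_k by R_∞ ∖ P_k, whose density is at most [6/κ_{k+1}]. *)
Lemma Rinf_rational : rationalN Rinf.
Proof.
  destruct Rinf_density_cv as [d Hd].
  exists (natZ Rinf). split; [|intros n; symmetry; apply natZ_of_nat].
  intros e He. destruct (small_tail e He) as [k Hk].
  exists (low_progressions k). split.
  { intros p Hp. apply in_map_iff in Hp as [r [<- _]]. simpl. pose proof (T_pos k). lia. }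
  assert (Hcv : Un_cv (dens (high k)) (d - low_density k)).
  { apply (cv_ext (fun n => dens Rinf n - dens (low k) n)%R).
    - intros n. rewrite (dens_split k n). ring.
    - apply CV_minus; [exact Hd|apply low_density_cv]. }
  exists (d - low_density k)%R. split.
  - apply cv_limsup, (cv_ext (dens (high k))); [|exact Hcv].
    intros n. symmetry. apply dens_seq_of_nat. intros x.
    rewrite natZ_of_nat, in_union_low. unfold high.
    destruct (low k x) eqn:E; [rewrite (low_Rinf k x E)|destruct (Rinf x)]; reflexivity.
  - assert (d - low_density k <= 6 / INR (kappa (S k)))%R
      by (apply (cv_le_const _ _ _ Hcv); intros n; apply dens_high_bound).
    lra.
Qed.

(** The density d of R_∞ satisfies 0 < d(P_1) ≤ d ≤ d(R_∞ ∖ P_0) ≤ 6/κ_1 ≤ 2/3. *)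
Lemma Rinf_density : exists d, has_density (natZ Rinf) d /\ (0 < d < 1)%R.
Proof.
  destruct Rinf_density_cv as [d Hd]. exists d. split.
  { apply (cv_ext (dens Rinf)); [|exact Hd].
    intros n. symmetry. apply dens_seq_of_nat, natZ_of_nat. }
  pose proof (T_succ 0) as TS. pose proof (kappa_succ_third 0) as K3.
  pose proof (third_ge3 0). pose proof (T_pos 0).
  split.
  - assert (Hpos : (0 < low_density 1)%R).
    { apply Rdiv_lt_0_compat; apply lt_0_INR; [|apply T_pos].
      apply (Nat.lt_le_trans _ 1); [lia|]. apply (cnt_pos _ _ (third 0 * T 0)); [nia|].
      unfold low. simpl. rewrite Bool.orb_false_r. apply level_true.
      rewrite Nat.div_mul, Nat.mod_small; lia. }
    assert (low_density 1 <= d)%R.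
    { apply (Rle_cv_lim (Un := dens (low 1)) (Vn := dens Rinf)); [|apply low_density_cv|exact Hd].
      intros n. rewrite (dens_split 1 n). pose proof (dens_high_bound 1 n). lra. }
    lra.
  - assert (d <= 6 / INR (kappa 1))%R.
    { apply (cv_le_const _ _ _ Hd). intros n. rewrite (dens_split 0 n).
      replace (dens (low 0) n) with 0%R by (unfold dens, low; simpl; rewrite cnt_false; simpl; lra).
      pose proof (dens_high_bound 0 n). lra. }
    pose proof (kappa_succ_ge 0) as K. pose proof (kappa_ge3 0).
    assert (H9 : (9 <= INR (kappa 1))%R) by (replace 9%R with (INR 9) by (simpl; lra); apply le_INR; lia).
    assert (6 / INR (kappa 1) <= 6 / 9)%R by (apply div_le_iff; [lra|]; apply (Rle_trans _ (6 / 9 * 9)); [lra|]; apply Rmult_le_compat_l; lra).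
    lra.
Qed.

End Construction.

Theorem proposition6 (T kappa : nat -> nat) :
  is_scale T kappa ->
  exists Rinf : nat -> bool,
    rationalN Rinf /\ sparsely_long_tail T kappa Rinf /\
    exists d, has_density (natZ Rinf) d /\ (0 < d < 1)%R.
Proof.
  intros Hscale. exists (Rinf T kappa).
  split; [|split].
  - apply Rinf_rational, Hscale.
  - apply Rinf_sparsely_long_tail, Hscale.
  - apply Rinf_density, Hscale.
Qed.
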